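(* Let $\sqrt{2} = (1.b_1 b_2 b_3 \cdots)_2$ be the binary expansion of $\sqrt 2$. For integers $n \geq 2$, let $L_n(x) = \left\lfloor \frac{x(2^n - x)}{2^{n-2}} \right\rfloor$ for $x \in X_n = \{1, 2, \dots, 2^n - 1\}$, call $n$ undesirable if there exists $x \in X_n$ with $L_n(x) = 2^{n-1}$, and let $d_N$ be the number of undesirable $n$ with $2 \le n \leq N$. If $\sqrt 2$ is simply normal to base $2$, i.e. $\lim_{n \to \infty} \frac{1}{n}\#\{1 \le i \le n : b_i = 0\} = 1/2$, then $\liminf_{N \to \infty} d_N / N \geq 1/6$. *)

From Stdlib Require Import Reals Lra Lia Arith List ZArith.
Open Scope R_scope.

(* i-th binary digit of sqrt 2 after the point: sqrt 2 = (1.b_1 b_2 ...)_2,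
   so b_i = floor(2^i * sqrt 2) mod 2  (Int_part is the floor). *)
Definition sqrt2_digit (i : nat) : Z :=
  Z.modulo (Int_part (sqrt 2 * 2 ^ i)) 2.

Definition zero_count (n : nat) : nat :=
  length (filter (fun i => Z.eqb (sqrt2_digit i) 0) (seq 1 n)).

(* L_n(x) = floor( x (2^n - x) / 2^(n-2) ), computed in nat (the argument is
   nonnegative for x in X_n, so nat division is the floor). *)
Definition L (n x : nat) : nat := (x * (2 ^ n - x)) / 2 ^ (n - 2).

Definition undesirable (n : nat) : Prop :=
  exists x, (1 <= x <= 2 ^ n - 1)%nat /\ L n x = (2 ^ (n - 1))%nat.

Definition undesirableb (n : nat) : bool :=
  existsb (fun x => Nat.eqb (L n x) (2 ^ (n - 1))) (seq 1 (2 ^ n - 1)).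

Lemma undesirableb_spec n : undesirableb n = true <-> undesirable n.
Proof.
  unfold undesirableb, undesirable. rewrite existsb_exists.
  split; intros [x [H1 H2]]; exists x; split.
  - apply in_seq in H1. lia.
  - now apply Nat.eqb_eq.
  - apply in_seq. lia.
  - now apply Nat.eqb_eq.
Qed.

Definition d (N : nat) : nat :=
  length (filter undesirableb (seq 2 (N - 1))).

(* With a_m = floor(2^m sqrt 2) and P = 2^m, the choice x = 2P - a_m gives
   L_{m+2}(x) = floor((4P^2 - a_m^2)/P) = 2^{m+1} as soon as
   0 <= 2P^2 - a_m^2 < P, and this holds whenever the five binary digits
   b_{m+1} .. b_{m+5} start with a 0 and do not continue as 1 1 or 1 0 1 1.
   So every digit 0 of sqrt 2 yields an undesirable index, except for the
   zeros starting one of those two patterns; each such zero can be charged to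
   the 1s of a "01" and of a "11" block, whence at most 2/3 of the 1s are
   charged.  Writing Z and O for the numbers of 0s and 1s, this gives
   d >= Z - (2/3) O, which tends to N/2 - N/3 = N/6 when Z ~ O ~ N/2. *)

From Stdlib Require Import Reals Lra Lia List ZArith.
Open Scope R_scope.

Lemma Int_part_double (x : R) :
  Int_part (2 * x) = (2 * Int_part x + Z.b2z (Z.odd (Int_part (2 * x))))%Z.
Proof.
  destruct (base_Int_part x) as [Hx1 Hx2].
  destruct (base_Int_part (2 * x)) as [H2x1 H2x2].
  assert (Hlo : (2 * Int_part x - 1 < Int_part (2 * x))%Z).
  { apply lt_IZR. rewrite minus_IZR, mult_IZR. simpl. lra. }
  assert (Hhi : (Int_part (2 * x) < 2 * Int_part x + 2)%Z).
  { apply lt_IZR. rewrite plus_IZR, mult_IZR. simpl. lra. }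
  pose proof (Z.div2_odd (Int_part (2 * x))) as Hdiv.
  destruct (Z.odd (Int_part (2 * x))); cbn [Z.b2z] in *; lia.
Qed.

Definition sqrt2_floor (m : nat) : Z := Int_part (sqrt 2 * 2 ^ m).

Definition sqrt2_bit (i : nat) : bool := Z.odd (sqrt2_floor i).

Lemma sqrt2_digit_bit (i : nat) : sqrt2_digit i = Z.b2z (sqrt2_bit i).
Proof. unfold sqrt2_digit, sqrt2_bit. now rewrite <- Z.bit0_odd, Z.bit0_mod. Qed.

Lemma sqrt2_floor_S (m : nat) :
  sqrt2_floor (S m) = (2 * sqrt2_floor m + Z.b2z (sqrt2_bit (S m)))%Z.
Proof.
  unfold sqrt2_bit, sqrt2_floor.
  replace (sqrt 2 * 2 ^ S m) with (2 * (sqrt 2 * 2 ^ m)) by (simpl; ring).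
  apply Int_part_double.
Qed.

Lemma sqrt2_floor_add6 (m : nat) :
  sqrt2_floor (m + 6) =
  (64 * sqrt2_floor m + 32 * Z.b2z (sqrt2_bit (m + 1))
   + 16 * Z.b2z (sqrt2_bit (m + 2)) + 8 * Z.b2z (sqrt2_bit (m + 3))
   + 4 * Z.b2z (sqrt2_bit (m + 4)) + 2 * Z.b2z (sqrt2_bit (m + 5))
   + Z.b2z (sqrt2_bit (m + 6)))%Z.
Proof.
  rewrite !Nat.add_succ_r, !sqrt2_floor_S, Nat.add_0_r. ring.
Qed.

(* With s = 2^m sqrt 2 and y = floor s: s^2 - y^2 <= 2 s (s - y) < (11/16) s < 2^m,
   the last step because sqrt 2 < 16/11. *)
Lemma sqrt2_floor_sq_bounds (m : nat) :
  sqrt 2 * 2 ^ m - IZR (sqrt2_floor m) < 11 / 32 ->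
  let y := Z.to_nat (sqrt2_floor m) in
  (y * y <= 2 * 2 ^ m * 2 ^ m < y * y + 2 ^ m)%nat.
Proof.
  intros Hgap y.
  set (P := 2 ^ m) in Hgap.
  set (s := sqrt 2 * P) in Hgap.
  assert (HP : 0 < P) by (apply pow_lt; lra).
  assert (Hsqrt2 : sqrt 2 * sqrt 2 = 2) by (apply sqrt_sqrt; lra).
  assert (Hsqrt2_pos : 0 < sqrt 2) by (apply sqrt_lt_R0; lra).
  assert (Hsqrt2_lt : sqrt 2 < 16 / 11) by nra.
  assert (Hs : 0 < s) by (unfold s; nra).
  assert (Hs2 : s * s = 2 * P * P) by (unfold s; nra).
  destruct (base_Int_part s) as [Hfl1 Hfl2].
  change (Int_part s) with (sqrt2_floor m) in Hfl1, Hfl2.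
  assert (Hfl_nonneg : (0 <= sqrt2_floor m)%Z).
  { apply Z.lt_succ_r, lt_IZR. rewrite succ_IZR. lra. }
  assert (Hy : INR y = IZR (sqrt2_floor m))
    by (unfold y; now rewrite INR_IZR_INZ, Z2Nat.id).
  assert (HPn : INR (2 ^ m)%nat = P) by (unfold P; rewrite pow_INR; simpl; f_equal; lra).
  set (yr := IZR (sqrt2_floor m)) in *.
  assert (Hyr : 0 <= yr) by (apply (IZR_le 0); exact Hfl_nonneg).
  split.
  - apply INR_le. rewrite !mult_INR, Hy, HPn. simpl. nra.
  - apply INR_lt. rewrite plus_INR, !mult_INR, Hy, HPn. simpl.
    assert (s * s - yr * yr <= 2 * (s - yr) * s) by nra.
    assert (2 * (s - yr) * s <= 11 / 16 * s) by nra.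
    assert (11 / 16 * s < P) by (unfold s; nra).
    lra.
Qed.

Lemma undesirable_of_sq_bounds (m y : nat) :
  (y * y <= 2 * 2 ^ m * 2 ^ m < y * y + 2 ^ m)%nat -> undesirable (m + 2).
Proof.
  intros [Hle Hlt].
  set (P := (2 ^ m)%nat) in *.
  assert (HP : (1 <= P)%nat) by (pose proof (Nat.pow_nonzero 2 m); lia).
  assert (Hy : (y < 2 * P)%nat) by nia.
  assert (H4P : (2 ^ (m + 2) = 4 * P)%nat) by (unfold P; rewrite Nat.pow_add_r; simpl; lia).
  exists (2 * P - y)%nat.
  unfold L. rewrite H4P.
  replace (m + 2 - 2)%nat with m by lia.
  replace (m + 2 - 1)%nat with (S m) by lia.
  rewrite Nat.pow_succ_r'. fold P.
  split; [lia|].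
  replace (4 * P - (2 * P - y))%nat with (2 * P + y)%nat by lia.
  symmetry. apply Nat.div_unique with (r := (2 * P * P - y * y)%nat); [lia|].
  assert (Hx : (2 * P - y + y = 2 * P)%nat) by lia.
  set (x := (2 * P - y)%nat) in *.
  nia.
Qed.

Lemma undesirable_of_sqrt2_floor_gap (m : nat) :
  (sqrt2_floor (m + 6) <= 64 * sqrt2_floor m + 21)%Z -> undesirable (m + 2).
Proof.
  intro Hgap.
  apply (undesirable_of_sq_bounds m (Z.to_nat (sqrt2_floor m))), sqrt2_floor_sq_bounds.
  destruct (base_Int_part (sqrt 2 * 2 ^ (m + 6))) as [_ Hfl].
  change (Int_part (sqrt 2 * 2 ^ (m + 6))) with (sqrt2_floor (m + 6)) in Hfl.
  apply IZR_le in Hgap. rewrite plus_IZR, mult_IZR in Hgap.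
  rewrite pow_add in Hfl. simpl in Hfl. lra.
Qed.

Fixpoint nsum (f : nat -> nat) (n : nat) : nat :=
  match n with O => O | S n => (nsum f n + f n)%nat end.

Lemma nsum_ext (f g : nat -> nat) (n : nat) :
  (forall i, f i = g i) -> nsum f n = nsum g n.
Proof. intro Hfg. induction n; simpl; congruence. Qed.

Lemma nsum_le (f g : nat -> nat) (n : nat) :
  (forall i, (f i <= g i)%nat) -> (nsum f n <= nsum g n)%nat.
Proof. intro Hfg. induction n; simpl; [lia|]. specialize (Hfg n). lia. Qed.

Lemma nsum_add (f g : nat -> nat) (n : nat) :
  nsum (fun i => f i + g i)%nat n = (nsum f n + nsum g n)%nat.
Proof. induction n; simpl; lia. Qed.

Lemma nsum_mul_l (c : nat) (f : nat -> nat) (n : nat) :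
  nsum (fun i => c * f i)%nat n = (c * nsum f n)%nat.
Proof. induction n; simpl; lia. Qed.

Lemma nsum_split (f : nat -> nat) (m n : nat) :
  nsum f (m + n) = (nsum f m + nsum (fun i => f (m + i)) n)%nat.
Proof. induction n; simpl; [now rewrite Nat.add_0_r|]. rewrite Nat.add_succ_r. simpl. lia. Qed.

Lemma nsum_mono (f : nat -> nat) (m n : nat) : (m <= n)%nat -> (nsum f m <= nsum f n)%nat.
Proof.
  intro Hmn. replace n with (m + (n - m))%nat by lia.
  rewrite nsum_split. lia.
Qed.

Lemma nsum_shift_le (f : nat -> nat) (k n : nat) :
  (nsum (fun i => f (k + i)) n <= nsum f (k + n))%nat.
Proof. rewrite nsum_split. lia. Qed.

Lemma length_filter_seq (p : nat -> bool) (a n : nat) :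
  length (filter p (seq a n)) = nsum (fun i => Nat.b2n (p (a + i)%nat)) n.
Proof.
  induction n; [reflexivity|].
  rewrite seq_S, filter_app, length_app, IHn. simpl.
  destruct (p (a + n)%nat); simpl; lia.
Qed.

Section BitPatterns.

Variable b : nat -> bool.

Definition zeros (n : nat) : nat := nsum (fun i => Nat.b2n (negb (b (i + 1)))) n.

Definition ones (n : nat) : nat := nsum (fun i => Nat.b2n (b (i + 1))) n.

Definition small_window (i : nat) : bool :=
  negb (b (i + 1)) && negb (b (i + 2) && (b (i + 3) || b (i + 4) && b (i + 5))).

Definition large_window (i : nat) : bool :=
  negb (b (i + 1)) && b (i + 2) && (b (i + 3) || b (i + 4) && b (i + 5)).

Definition pair01 (i : nat) : bool := negb (b (i + 1)) && b (i + 2).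

Definition pair11 (i : nat) : bool := b (i + 1) && b (i + 2).

Lemma zeros_add_ones (n : nat) : (zeros n + ones n = n)%nat.
Proof.
  unfold zeros, ones. induction n; simpl; [reflexivity|].
  destruct (b (n + 1)); simpl; lia.
Qed.

(* A large window at i contains the block 01 at i+1 and a block 11 at i+2 or
   at i+4. *)
Lemma large_window_charge (i : nat) :
  (3 * Nat.b2n (large_window i)
   <= 2 * Nat.b2n (pair01 i) + Nat.b2n (pair11 (i + 1)) + Nat.b2n (pair11 (i + 3)))%nat.
Proof.
  unfold large_window, pair01, pair11.
  rewrite <- !Nat.add_assoc; simpl.
  destruct (b (i + 1)), (b (i + 2)), (b (i + 3)), (b (i + 4)), (b (i + 5)); simpl; lia.
Qed.

Lemma pair01_add_pair11 (i : nat) :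
  (Nat.b2n (pair01 i) + Nat.b2n (pair11 i) = Nat.b2n (b (i + 2)))%nat.
Proof. unfold pair01, pair11. destruct (b (i + 1)), (b (i + 2)); reflexivity. Qed.

Lemma large_windows_le_ones (n : nat) :
  (3 * nsum (fun i => Nat.b2n (large_window i)) n <= 2 * ones (n + 4))%nat.
Proof.
  set (p01 := fun i => Nat.b2n (pair01 i)).
  set (p11 := fun i => Nat.b2n (pair11 i)).
  assert (Hcharge : (3 * nsum (fun i => Nat.b2n (large_window i)) n
            <= 2 * nsum p01 n + nsum (fun i => p11 (1 + i)) n
               + nsum (fun i => p11 (3 + i)) n)%nat).
  { rewrite <- nsum_mul_l, <- !nsum_mul_l, <- !nsum_add. apply nsum_le. intro i.
    unfold p01, p11. rewrite (Nat.add_comm 1 i), (Nat.add_comm 3 i). apply large_window_charge. }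
  assert (Hpairs : (nsum p01 (n + 3) + nsum p11 (n + 3) <= ones (n + 4))%nat).
  { rewrite <- nsum_add.
    rewrite (nsum_ext _ (fun i => Nat.b2n (b (1 + i + 1)))).
    2:{ intro i. unfold p01, p11. rewrite pair01_add_pair11. do 2 f_equal. lia. }
    unfold ones. replace (n + 4)%nat with (1 + (n + 3))%nat by lia.
    rewrite (nsum_split _ 1). cbv beta. lia. }
  pose proof (nsum_mono p01 n (n + 3) ltac:(lia)).
  pose proof (nsum_shift_le p11 1 n).
  pose proof (nsum_shift_le p11 3 n).
  pose proof (nsum_mono p11 (1 + n) (n + 3) ltac:(lia)).
  replace (3 + n)%nat with (n + 3)%nat in * by lia.
  lia.
Qed.

Lemma zeros_le_small_windows (U : nat -> bool) (n : nat) :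
  (forall i, small_window i = true -> U i = true) ->
  (5 * zeros n <= 3 * nsum (fun i => Nat.b2n (U i)) n + 2 * (n + 4))%nat.
Proof.
  intro HU.
  assert (Hzeros : (zeros n <= nsum (fun i => Nat.b2n (U i)) n
                               + nsum (fun i => Nat.b2n (large_window i)) n)%nat).
  { unfold zeros. rewrite <- nsum_add. apply nsum_le. intro i.
    specialize (HU i). unfold small_window, large_window in *.
    destruct (b (i + 1)), (b (i + 2)), (b (i + 3)), (b (i + 4)), (b (i + 5)),
      (U i); cbn in *; try lia; now discriminate HU. }
  pose proof (large_windows_le_ones n).
  pose proof (zeros_add_ones (n + 4)).
  pose proof (nsum_mono (fun i => Nat.b2n (negb (b (i + 1)))) n (n + 4) ltac:(lia)).
  unfold zeros in *. lia.
Qed.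

End BitPatterns.

Lemma sqrt2_small_window_undesirable (m : nat) :
  small_window sqrt2_bit m = true -> undesirable (m + 2).
Proof.
  intro Hsmall. apply undesirable_of_sqrt2_floor_gap.
  rewrite sqrt2_floor_add6. revert Hsmall. unfold small_window.
  destruct (sqrt2_bit (m + 1)), (sqrt2_bit (m + 2)), (sqrt2_bit (m + 3)),
    (sqrt2_bit (m + 4)), (sqrt2_bit (m + 5)), (sqrt2_bit (m + 6));
    cbn; intro; try discriminate; lia.
Qed.

Lemma zero_count_zeros (n : nat) : zero_count n = zeros sqrt2_bit n.
Proof.
  unfold zero_count, zeros. rewrite length_filter_seq. apply nsum_ext. intro i.
  rewrite sqrt2_digit_bit, (Nat.add_comm 1 i).
  now destruct (sqrt2_bit (i + 1)).
Qed.

Lemma d_S (n : nat) : d (S n) = nsum (fun i => Nat.b2n (undesirableb (2 + i))) n.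
Proof. unfold d. rewrite Nat.sub_succ, Nat.sub_0_r. apply length_filter_seq. Qed.

Lemma zero_count_le_d (n : nat) : (5 * zero_count n <= 3 * d (S n) + 2 * (n + 4))%nat.
Proof.
  rewrite zero_count_zeros, d_S. apply zeros_le_small_windows.
  intros i Hsmall. apply undesirableb_spec. rewrite Nat.add_comm.
  now apply sqrt2_small_window_undesirable.
Qed.

Lemma Un_cv_ratio_eventually_ge (z : nat -> nat) (l delta : R) :
  Un_cv (fun n => INR (z n) / INR n) l -> delta > 0 ->
  exists N0 : nat, forall n : nat, (n >= N0)%nat -> (l - delta) * INR n <= INR (z n).
Proof.
  intros Hcv Hdelta.
  destruct (Hcv delta Hdelta) as [N0 HN0].
  exists (S N0). intros n Hn.
  specialize (HN0 n ltac:(lia)). unfold R_dist in HN0.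
  apply Rabs_def2 in HN0. destruct HN0 as [_ HN0].
  assert (Hpos : 0 < INR n) by (apply lt_0_INR; lia).
  replace (INR (z n)) with (INR (z n) / INR n * INR n) by (field; lra).
  nra.
Qed.

Theorem corollary3p4 :
  Un_cv (fun n => INR (zero_count n) / INR n) (1 / 2) ->
  forall eps : R, eps > 0 ->
    exists N0 : nat, forall N : nat, (N >= N0)%nat ->
      INR (d N) / INR N >= 1 / 6 - eps.
Proof.
  intros Hcv eps Heps.
  destruct (Un_cv_ratio_eventually_ge zero_count (1 / 2) (eps / 10) Hcv) as [M0 HM0]; [lra|].
  destruct (INR_unbounded (4 / eps)) as [K HK].
  exists (S (max M0 K)). intros N HN.
  destruct N as [|M]; [lia|].
  specialize (HM0 M ltac:(lia)).
  pose proof (le_INR _ _ (zero_count_le_d M)) as Hcount.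
  rewrite !plus_INR, !mult_INR, plus_INR in Hcount. simpl in Hcount.
  assert (HKM : INR K <= INR M) by (apply le_INR; lia).
  assert (HepsM : 4 <= eps * INR M).
  { replace 4 with (eps * (4 / eps)) by (field; lra). nra. }
  assert (HM : 0 < INR M + 1) by (pose proof (pos_INR M); lra).
  rewrite S_INR.
  apply Rle_ge, (Rmult_le_reg_r (INR M + 1)); [exact HM|].
  unfold Rdiv. rewrite Rmult_assoc, Rinv_l by lra.
  nra.
Qed.
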